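(* Suppose $\mathit{Act}$ is finite and $|\mathit{Act}|\ge2$. Then $\mathcal{E}_{\omega,f}'=\mathcal{E}_\omega\cup\mathcal{E}_{v,f}'$ is complete for $\simeq_\omega$ over open monitors: for all monitors $m,n$, if $m\simeq_\omega n$ then $\mathcal{E}_{\omega,f}'\vdash m=n$.
   Context: Monitors: terms $m,n ::= v \mid a.m \mid m+n \mid x$ over a finite action set $\mathit{Act}$ and variables $x$, verdicts $v::=\mathit{end}\mid\mathit{yes}\mid\mathit{no}$. $\sum_{i\in I}m_i$ is $\mathit{end}$ for $I=\emptyset$. Semantics: $\xrightarrow{\alpha}$ ($\alpha\in\mathit{Act}\cup\{\tau\}$) is the least relation with $a.m\xrightarrow{a}m$; $m\xrightarrow{\alpha}m'$ implies $m+n\xrightarrow{\alpha}m'$ and $n+m\xrightarrow{\alpha}m'$; $v\xrightarrow{\alpha}v$ for verdicts $v$. Weak transitions: $m\xRightarrow{\varepsilon}m'$ iff $m(\xrightarrow{\tau})^*m'$; $m\xRightarrow{a}m'$ iff $m\xRightarrow{\varepsilon}\xrightarrow{a}\xRightarrow{\varepsilon}m'$; $m\xRightarrow{as'}m'$ ($s'\ne\varepsilon$) iff $m\xRightarrow{a}m_1\xRightarrow{s'}m'$. For closed $m$, $L_a(m)=\{s\mid m\xRightarrow{s}\mathit{yes}\}$, $L_r(m)=\{s\mid m\xRightarrow{s}\mathit{no}\}$; closed $m\simeq_\omega n$ iff $L_a(m)\cdot\mathit{Act}^\omega=L_a(n)\cdot\mathit{Act}^\omega$ and $L_r(m)\cdot\mathit{Act}^\omega=L_r(n)\cdot\mathit{Act}^\omega$;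 for open terms iff $\sigma(m)\simeq_\omega\sigma(n)$ for all closed substitutions $\sigma$. Notation for $s\in\mathit{Act}^*$: $s.m$ is $a_1.(\cdots a_k.m)$ if $s=a_1\dots a_k$ ($\varepsilon.m=m$); $s^1=s$, $s^i=ss^{i-1}$; $\mathit{pre}(s)$ is the set of prefixes of $s$; $\overline{s}^{\le}(m)=\sum_{|s'|\le|s|,\ s'\notin\mathit{pre}(s)}s'.m$; $\overline{s}(m)=\overline{s}^{\le}(m)+s.\sum_{a\in\mathit{Act}}a.m$; $\overline{s}^{(1)}(m)=\overline{s}(m)$ and for $k\ge2$, $\overline{s}^{(k)}(m)=\sum_{1\le i<k-1}s^i.\overline{s}^{\le}(m)+s^{k-1}.\overline{s}(m)$. $\mathcal{E}\vdash m=n$ denotes derivability by reflexivity, symmetry, transitivity, substitution and congruence for $a.\_$ and $+$. $\mathcal{E}_v$: (A1) $x+y=y+x$; (A2) $x+(y+z)=(x+y)+z$; (A3) $x+x=x$; (A4) $x+\mathit{end}=x$; for each $a\in\mathit{Act}$: ($E_a$) $a.\mathit{end}=\mathit{end}$; ($Y_a$) $\mathit{yes}=\mathit{yes}+a.\mathit{yes}$; ($N_a$) $\mathit{no}=\mathit{no}+a.\mathit{no}$; ($D_a$) $a.(x+y)=a.x+a.y$. $\mathcal{E}_\omega=\mathcal{E}_v\cup\{Y_\omega,N_\omega\}$ with ($Y_\omega$) $\mathit{yes}=\sum_{a\in\mathit{Act}}a.\mathit{yes}$, ($N_\omega$) $\mathit{no}=\sum_{a\in\mathit{Act}}a.\mathit{no}$.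 $\mathcal{E}_{v,f}'=\mathcal{E}_v\cup\{O1\}\cup\mathcal{O}$ with (O1) $\mathit{yes}+\mathit{no}=\mathit{yes}+\mathit{no}+x$ and $\mathcal{O}=\{O2_{s,k}\mid s\in\mathit{Act}^*,k\ge1\}$, ($O2_{s,k}$) $x+s.x+\overline{s}^{(k)}(\mathit{yes}+\mathit{no})=x+\overline{s}^{(k)}(\mathit{yes}+\mathit{no})$. *)

From mathcomp Require Import all_boot.
Set Implicit Arguments. Unset Strict Implicit. Unset Printing Implicit Defensive.

Inductive verdict := Vend | Vyes | Vno.

Section Monitors.
Variable A : finType.

Inductive mon : Type :=
  | Verd of verdict
  | Pre of A & mon
  | Sum of mon & mon
  | Var of nat.

Definition mend := Verd Vend.
Definition myes := Verd Vyes.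
Definition mno := Verd Vno.

Fixpoint bigsum (l : seq mon) : mon :=
  match l with
  | [::] => mend
  | [:: m] => m
  | m :: l' => Sum m (bigsum l')
  end.

Fixpoint wpre (s : seq A) (m : mon) : mon :=
  match s with
  | [::] => m
  | a :: s' => Pre a (wpre s' m)
  end.

Fixpoint subst (sg : nat -> mon) (m : mon) : mon :=
  match m with
  | Verd v => Verd v
  | Pre a m' => Pre a (subst sg m')
  | Sum m1 m2 => Sum (subst sg m1) (subst sg m2)
  | Var x => sg x
  end.

Fixpoint closed (m : mon) : bool :=
  match m with
  | Verd _ => true
  | Pre _ m' => closed m'
  | Sum m1 m2 => closed m1 && closed m2
  | Var _ => false
  end.

(* operational semantics; None stands for tau *)
Inductive step : mon -> option A -> mon -> Prop :=
  | st_pre a m : step (Pre a m) (Some a) m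
  | st_sumL m n al m' : step m al m' -> step (Sum m n) al m'
  | st_sumR m n al m' : step m al m' -> step (Sum n m) al m'
  | st_verd v al : step (Verd v) al (Verd v).

Inductive taus : mon -> mon -> Prop :=
  | taus_refl m : taus m m
  | taus_step m m1 m' : step m None m1 -> taus m1 m' -> taus m m'.

Definition weak_act (m : mon) (a : A) (m' : mon) : Prop :=
  exists m1 m2, taus m m1 /\ step m1 (Some a) m2 /\ taus m2 m'.

Fixpoint wtrace (m : mon) (s : seq A) (m' : mon) : Prop :=
  match s with
  | [::] => taus m m'
  | a :: s' =>
      match s' with
      | [::] => weak_act m a m'
      | _ :: _ => exists m1, weak_act m a m1 /\ wtrace m1 s' m'
      end
  end.

Definition La (m : mon) (s : seq A) : Prop := wtrace m s myes.
Definition Lr (m : mon) (s : seq A) : Prop := wtrace m s mno.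

(* L . Act^omega, as a predicate on infinite words *)
Definition omega_ext (L : seq A -> Prop) (w : nat -> A) : Prop :=
  exists k, L (mkseq w k).

Definition omega_eq_closed (m n : mon) : Prop :=
  (forall w, omega_ext (La m) w <-> omega_ext (La n) w) /\
  (forall w, omega_ext (Lr m) w <-> omega_ext (Lr n) w).

Definition omega_eq (m n : mon) : Prop :=
  forall sg : nat -> mon, (forall x, closed (sg x)) ->
    omega_eq_closed (subst sg m) (subst sg n).

Inductive derivable (E : mon -> mon -> Prop) : mon -> mon -> Prop :=
  | d_ax m n : E m n -> derivable E m n
  | d_refl m : derivable E m m
  | d_sym m n : derivable E m n -> derivable E n m
  | d_trans m n p : derivable E m n -> derivable E n p -> derivable E m p
  | d_subst sg m n : derivable E m n -> derivable E (subst sg m) (subst sg n)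
  | d_pre a m n : derivable E m n -> derivable E (Pre a m) (Pre a n)
  | d_sum m1 n1 m2 n2 : derivable E m1 n1 -> derivable E m2 n2 ->
      derivable E (Sum m1 m2) (Sum n1 n2).

Fixpoint words_le (n : nat) : seq (seq A) :=
  match n with
  | 0 => [:: [::]]
  | n'.+1 => [::] :: [seq a :: w | a <- enum A, w <- words_le n']
  end.

Definition wpow (s : seq A) (i : nat) : seq A := flatten (nseq i s).

Definition sbar_le (s : seq A) (m : mon) : mon :=
  bigsum [seq wpre s' m | s' <- words_le (size s) & ~~ prefix s' s].

Definition sumAct (m : mon) : mon := bigsum [seq Pre a m | a <- enum A].

Definition sbar (s : seq A) (m : mon) : mon :=
  Sum (sbar_le s m) (wpre s (sumAct m)).

Definition sbar_k (s : seq A) (k : nat) (m : mon) : mon :=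
  if k <= 1 then sbar s m
  else bigsum ([seq wpre (wpow s i) (sbar_le s m) | i <- iota 1 (k - 2)]
               ++ [:: wpre (wpow s k.-1) (sbar s m)]).

Definition vx := Var 0.
Definition vy := Var 1.
Definition vz := Var 2.

(* E'_{omega,f} = E_omega U E'_{v,f} = E_v U {Y_omega, N_omega, O1} U O *)
Inductive E_omega_f : mon -> mon -> Prop :=
  | ax_A1 : E_omega_f (Sum vx vy) (Sum vy vx)
  | ax_A2 : E_omega_f (Sum vx (Sum vy vz)) (Sum (Sum vx vy) vz)
  | ax_A3 : E_omega_f (Sum vx vx) vx
  | ax_A4 : E_omega_f (Sum vx mend) vx
  | ax_E a : E_omega_f (Pre a mend) mend
  | ax_Y a : E_omega_f myes (Sum myes (Pre a myes))
  | ax_N a : E_omega_f mno (Sum mno (Pre a mno))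
  | ax_D a : E_omega_f (Pre a (Sum vx vy)) (Sum (Pre a vx) (Pre a vy))
  | ax_Yomega : E_omega_f myes (sumAct myes)
  | ax_Nomega : E_omega_f mno (sumAct mno)
  | ax_O1 : E_omega_f (Sum myes mno) (Sum (Sum myes mno) vx)
  | ax_O2 (s : seq A) (k : nat) : 1 <= k ->
      E_omega_f (Sum (Sum vx (wpre s vx)) (sbar_k s k (Sum myes mno)))
                (Sum vx (sbar_k s k (Sum myes mno))).

End Monitors.

From Pilot Require Import Defs.
From mathcomp Require Import all_boot zify.
Set Implicit Arguments. Unset Strict Implicit. Unset Printing Implicit Defensive.

(* Up to the laws of a semilattice with unit (A1-A4, E_a, D_a) every
   monitor is a finite sum of monomials u.v, with u a word and v = yes, no or a
   variable (its flattening).  Fix a depth D bounding the prefix lengths of all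
   monomials of m and n.  By Y_omega / N_omega each verdict monomial u.yes is the
   sum of w.yes over the words w of length exactly D extending u.  A variable
   monomial u.x is saturated when every length-D extension of u reaches both yes
   and no; it is then absorbed by O1 (u.(yes+no) = u.(yes+no) + u.x).  What is
   left, the canonical form, is determined by the depth-D words reaching yes,
   those reaching no, and the unsaturated variable monomials.

   A closed monitor reaches yes (no) along s iff some yes (no)
   monomial is a prefix of s.  Instantiating m ~omega n with the trivial
   substitution shows that m and n reach yes / no on the same depth-D words;
   instantiating x := v.yes or v.no with an aperiodic marker word v (built from
   two distinct actions) shows that they have the same unsaturated variable
   monomials.  So the canonical forms agree and m = n is derivable. *)

Section Completeness.
Variable A : finType.
Local Notation mon := (mon A).
Local Notation "m =E n" := (derivable (@E_omega_f A) m n) (at level 70).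

Lemma der_refl m : m =E m. Proof. exact: d_refl. Qed.

Definition subst3 (p q r : mon) : nat -> mon := fun i => nth (mend A) [:: p; q; r] i.

Lemma sum_comm p q : Sum p q =E Sum q p.
Proof. exact: (d_subst (subst3 p q (mend A)) (d_ax (ax_A1 A))). Qed.

Lemma sum_assoc p q r : Sum p (Sum q r) =E Sum (Sum p q) r.
Proof. exact: (d_subst (subst3 p q r) (d_ax (ax_A2 A))). Qed.

Lemma sum_idem p : Sum p p =E p.
Proof. exact: (d_subst (subst3 p p p) (d_ax (ax_A3 A))). Qed.

Lemma sum_end p : Sum p (mend A) =E p.
Proof. exact: (d_subst (subst3 p p p) (d_ax (ax_A4 A))). Qed.

Lemma pre_end a : Pre a (mend A) =E mend A.
Proof. exact: (d_ax (ax_E a)). Qed.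

Lemma pre_sum a p q : Pre a (Sum p q) =E Sum (Pre a p) (Pre a q).
Proof. exact: (d_subst (subst3 p q q) (d_ax (ax_D a))). Qed.

Lemma yes_no_absorb p : Sum (myes A) (mno A) =E Sum (Sum (myes A) (mno A)) p.
Proof. exact: (d_subst (subst3 p p p) (d_ax (ax_O1 A))). Qed.

Definition fsum (l : seq mon) : mon := foldr (@Sum A) (mend A) l.

Lemma fsum_cat l1 l2 : fsum (l1 ++ l2) =E Sum (fsum l1) (fsum l2).
Proof.
elim: l1 => [|x l1 IH] /=; first exact: d_trans (d_sym (sum_end _)) (sum_comm _ _).
exact: d_trans (d_sum (der_refl x) IH) (sum_assoc _ _ _).
Qed.

Lemma bigsum_fsum l : bigsum l =E fsum l.
Proof.
elim: l => [|x [|y l] IH] /=; [exact: der_refl | exact: d_sym (sum_end _) |].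
exact: d_sum (der_refl _) IH.
Qed.

Lemma fsum_congr (T : Type) (f g : T -> mon) l :
  (forall x, f x =E g x) -> fsum (map f l) =E fsum (map g l).
Proof.
move=> fg; elim: l => [|x l IH] /=; [exact: der_refl | exact: d_sum (fg x) IH].
Qed.

Lemma fsum_flatten (ll : seq (seq mon)) : fsum (flatten ll) =E fsum (map fsum ll).
Proof.
elim: ll => [|l ll IH] /=; first exact: der_refl.
exact: d_trans (fsum_cat _ _) (d_sum (der_refl _) IH).
Qed.

Lemma fsum_absorb (T : eqType) (f : T -> mon) (L : seq T) e : e \in L ->
  fsum (map f L) =E Sum (f e) (fsum (map f L)).
Proof.
elim: L => [|x L IH] //=; rewrite in_cons => /orP [/eqP ->|eL].
  exact: d_trans (d_sum (d_sym (sum_idem _)) (der_refl _)) (d_sym (sum_assoc _ _ _)).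
apply: d_trans (d_sum (der_refl _) (IH eL)) _.
apply: d_trans (sum_assoc _ _ _) _.
exact: d_trans (d_sum (sum_comm _ _) (der_refl _)) (d_sym (sum_assoc _ _ _)).
Qed.

Lemma fsum_sub (T : eqType) (f : T -> mon) (L1 L2 : seq T) : {subset L1 <= L2} ->
  fsum (map f L2) =E Sum (fsum (map f L1)) (fsum (map f L2)).
Proof.
elim: L1 => [|x L1 IH] sub12 /=.
  exact: d_trans (d_sym (sum_end _)) (sum_comm _ _).
have sub1 : {subset L1 <= L2} by move=> y y1; apply: sub12; rewrite in_cons y1 orbT.
apply: d_trans _ (sum_assoc _ _ _).
apply: d_trans _ (d_sum (der_refl _) (IH sub1)).
by apply: fsum_absorb; apply: sub12; apply: mem_head.
Qed.

Lemma fsum_eqset (T : eqType) (f : T -> mon) (L1 L2 : seq T) : L1 =i L2 ->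
  fsum (map f L1) =E fsum (map f L2).
Proof.
move=> L12.
have sub12 : {subset L1 <= L2} by move=> y; rewrite L12.
have sub21 : {subset L2 <= L1} by move=> y; rewrite L12.
apply: d_trans (fsum_sub f sub21) _.
exact: d_trans (sum_comm _ _) (d_sym (fsum_sub f sub12)).
Qed.

Lemma fsum_absorb_all (T : eqType) (f : T -> mon) (F : mon) (X : seq T) :
  (forall e, e \in X -> F =E Sum (f e) F) -> Sum F (fsum (map f X)) =E F.
Proof.
elim: X => [|e X IH] absorb /=; first exact: sum_end.
apply: d_trans (sum_assoc _ _ _) _; apply: d_trans (d_sum (sum_comm _ _) (der_refl _)) _.
apply: d_trans (d_sum (d_sym (absorb e (mem_head _ _))) (der_refl _)) _.
by apply: IH => e' e'X; apply: absorb; rewrite in_cons e'X orbT.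
Qed.

Lemma wpre_cat u w (m : mon) : wpre (u ++ w) m = wpre u (wpre w m).
Proof. by elim: u => //= a u ->. Qed.

Lemma wpre_congr w m n : m =E n -> wpre w m =E wpre w n.
Proof. by elim: w => [|a w IH] //= mn; apply: d_pre (IH mn). Qed.

Lemma pre_fsum a l : Pre a (fsum l) =E fsum (map (Pre a) l).
Proof.
elim: l => [|x l IH] /=; first exact: pre_end.
exact: d_trans (pre_sum _ _ _) (d_sum (der_refl _) IH).
Qed.

Lemma wpre_fsum w l : wpre w (fsum l) =E fsum (map (wpre w) l).
Proof.
elim: w l => [|a w IH] l /=; first by rewrite map_id; apply: der_refl.
apply: d_trans (d_pre a (IH l)) _.
by apply: d_trans (pre_fsum _ _) _; rewrite -map_comp; apply: der_refl.
Qed.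

Lemma wpre_sum w p q : wpre w (Sum p q) =E Sum (wpre w p) (wpre w q).
Proof.
elim: w => [|a w IH] /=; first exact: der_refl.
exact: d_trans (d_pre a IH) (pre_sum _ _ _).
Qed.

Lemma closed_wpre v (t : mon) : Defs.closed (wpre v t) = Defs.closed t.
Proof. by elim: v => //= a v ->. Qed.

(* Monomials: a word followed by a verdict (true = yes, false = no) or a
   variable.  The flattening of a monitor lists its monomials. *)

Definition monomial := (seq A * (bool + nat))%type.
Definition verd_of (b : bool) := if b then Vyes else Vno.
Definition leaf (l : bool + nat) : mon :=
  match l with inl b => Verd A (verd_of b) | inr x => Var A x end.
Definition term_of (e : monomial) : mon := wpre e.1 (leaf e.2).
Definition is_var (e : monomial) : bool := if e.2 is inr _ then true else false.

Fixpoint flat (m : mon) : seq monomial :=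
  match m with
  | Verd Vyes => [:: ([::], inl true)]
  | Verd Vno => [:: ([::], inl false)]
  | Verd Vend => [::]
  | Pre a m' => [seq (a :: e.1, e.2) | e <- flat m']
  | Sum m1 m2 => flat m1 ++ flat m2
  | Var x => [:: ([::], inr x)]
  end.

Lemma flat_sound m : m =E fsum (map term_of (flat m)).
Proof.
elim: m => [[]| a m IH | m1 IH1 m2 IH2 | x] /=; try exact: d_sym (sum_end _).
- exact: der_refl.
- apply: d_trans (d_pre a IH) _; apply: d_trans (pre_fsum _ _) _.
  by rewrite -!map_comp; apply: der_refl.
- by rewrite map_cat; apply: d_trans (d_sum IH1 IH2) (d_sym (fsum_cat _ _)).
Qed.

Lemma flat_wpre v (t : mon) : flat (wpre v t) = [seq (v ++ e.1, e.2) | e <- flat t].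
Proof.
elim: v => [|a v IH] /=; last by rewrite IH -map_comp.
by rewrite -[LHS]map_id; apply: eq_map => -[].
Qed.

Fixpoint words_of_size k : seq (seq A) :=
  if k is k'.+1 then flatten [seq [seq a :: w | w <- words_of_size k'] | a <- enum A]
  else [:: [::]].

Lemma mem_words_of_size k w : (w \in words_of_size k) = (size w == k).
Proof.
elim: k w => [|k IH] [|a w] //=; try by apply/negbTE/flatten_mapP => -[b _ /mapP [w' _]].
rewrite eqSS -IH; apply/flatten_mapP/idP; first by case=> b _ /mapP [w' w'k [_ ->]].
by move=> wk; exists a; rewrite ?mem_enum //; apply/mapP; exists w.
Qed.

Lemma verdict_sumAct b : leaf (inl b) =E sumAct (leaf (inl b)).
Proof. by case: b; [apply: d_ax (ax_Yomega A) | apply: d_ax (ax_Nomega A)]. Qed.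

Lemma verdict_expand b k :
  leaf (inl b) =E fsum [seq wpre w (leaf (inl b)) | w <- words_of_size k].
Proof.
elim: k => [|k IH] /=; first exact: d_sym (sum_end _).
apply: d_trans (verdict_sumAct b) _; apply: d_trans (bigsum_fsum _) _.
apply: d_trans (fsum_congr _ (fun a => d_pre a IH)) _.
apply: d_trans (fsum_congr _ (fun a => pre_fsum a _)) _.
rewrite map_flatten; apply: d_sym; apply: d_trans (fsum_flatten _) _.
by rewrite -!map_comp; apply: fsum_congr => a /=; rewrite -!map_comp; apply: der_refl.
Qed.

Definition pad (D : nat) (e : monomial) : seq monomial :=
  let (u, l) := e in
  match l with
  | inl b => [seq (u ++ w, inl b) | w <- words_of_size (D - size u)]
  | inr _ => [:: e]
  end.

Lemma pad_sound D e : term_of e =E fsum (map term_of (pad D e)).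
Proof.
case: e => u [b|x] /=; last exact: d_sym (sum_end _).
apply: d_trans (wpre_congr u (verdict_expand b (D - size u))) _.
apply: d_trans (wpre_fsum _ _) _.
by rewrite -!map_comp; apply: fsum_congr => w /=; rewrite /term_of wpre_cat; apply: der_refl.
Qed.

Lemma pad_all_sound D L :
  fsum (map term_of L) =E fsum (map term_of (flatten (map (pad D) L))).
Proof.
elim: L => [|e L IH] /=; first exact: der_refl.
by rewrite map_cat; apply: d_trans _ (d_sym (fsum_cat _ _)); apply: d_sum (pad_sound D e) IH.
Qed.

Definition bounded (D : nat) (L : seq monomial) := forall e, e \in L -> size e.1 <= D.

Definition covered (b : bool) (L : seq monomial) (w : seq A) : bool :=
  has (fun e : monomial => (e.2 == inl b) && prefix e.1 w) L.

Definition saturated D L (u : seq A) : bool :=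
  all (fun w => prefix u w ==> covered true L w && covered false L w) (words_of_size D).

Definition depth_verdicts D b L : seq monomial :=
  [seq (w, inl b) | w <- words_of_size D & covered b L w].

Definition canon D L := depth_verdicts D true L ++ depth_verdicts D false L ++
  [seq e <- L | is_var e && ~~ saturated D L e.1].

Definition saturated_vars D L := [seq e <- L | is_var e && saturated D L e.1].

Lemma mem_depth_verdicts D b L w l :
  ((w, l) \in depth_verdicts D b L) = [&& l == inl b, size w == D & covered b L w].
Proof.
apply/mapP/idP.
  case=> w'; rewrite mem_filter mem_words_of_size => /andP [cov sz] [-> ->].
  by rewrite eqxx sz cov.
case/and3P => /eqP -> sz cov; exists w => //.
by rewrite mem_filter mem_words_of_size sz cov.
Qed.

Lemma pad_all_mem D L : bounded D L ->
  flatten (map (pad D) L) =i canon D L ++ saturated_vars D L.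
Proof.
move=> LD [w [b|x]]; rewrite /canon !mem_cat !mem_depth_verdicts !mem_filter /=;
  apply/flatten_mapP/idP.
- case=> -[u [b'|y]] uL /=; last by rewrite mem_seq1 => /eqP [].
  case/mapP => w' w'D [-> ->]; rewrite mem_words_of_size in w'D.
  have cov : covered b' L (u ++ w').
    by apply/hasP; exists (u, inl b') => //=; rewrite eqxx prefix_prefix.
  have sz : size (u ++ w') == D by rewrite size_cat (eqP w'D) subnKC // (LD _ uL).
  by move: cov; case: b' uL => _ cov; rewrite eqxx sz cov ?orbT.
- have from_cov b' : [&& (inl b : bool + nat) == inl b', size w == D & covered b' L w] ->
      exists2 e, e \in L & (w, inl b) \in pad D e.
    case/and3P => /eqP [<-] /eqP wD /hasP [[u l] uL /= /andP [/eqP lb uw]]; subst l.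
    exists (u, inl b) => //=; apply/mapP; exists (drop (size u) w).
      by rewrite mem_words_of_size size_drop wD.
    by case/prefixP: uw => w' ->; rewrite drop_size_cat.
  by rewrite !orbF => /orP [] /from_cov.
- case=> -[u [b'|y]] uL /=; first by case/mapP.
  by rewrite mem_seq1 => /eqP [-> ->]; rewrite uL; case: (saturated D L u).
- by move=> xw; exists (w, inr x); rewrite ?mem_seq1 //; case/orP: xw => /andP [].
Qed.

(* The depth-D verdict monomials below a saturated prefix u sum up to the
   expansions of u.yes and u.no, so the canonical form absorbs u.(yes + no). *)
Lemma canon_absorbs_saturated D L u : bounded D L -> size u <= D -> saturated D L u ->
  fsum (map term_of (canon D L)) =E
  Sum (wpre u (Sum (myes A) (mno A))) (fsum (map term_of (canon D L))).
Proof.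
move=> LD uD sat.
have sub : {subset pad D (u, inl true) ++ pad D (u, inl false) <= canon D L}.
  move=> [w l]; rewrite mem_cat /canon !mem_cat !mem_depth_verdicts /=.
  have in_depth b : (w, l) \in [seq (u ++ w0, inl b) | w0 <- words_of_size (D - size u)] ->
      [&& l == inl b, size w == D & covered b L w].
    case/mapP => w' w'D [-> ->]; rewrite mem_words_of_size in w'D.
    have uw'D : size (u ++ w') == D by rewrite size_cat (eqP w'D) subnKC.
    have := allP sat (u ++ w'); rewrite mem_words_of_size uw'D prefix_prefix.
    by rewrite eqxx => /(_ isT) /andP []; case: b.
  by case/orP => /in_depth ->; rewrite ?orbT.
apply: d_trans (fsum_sub term_of sub) _; apply: d_sum (der_refl _).
rewrite map_cat; apply: d_trans (fsum_cat _ _) _.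
apply: d_trans (d_sum (d_sym (pad_sound D _)) (d_sym (pad_sound D _))) _.
exact: d_sym (wpre_sum _ _ _).
Qed.

(* Consequently, by O1, it absorbs every saturated variable monomial. *)
Lemma canon_absorbs_var D L e : bounded D L -> e \in saturated_vars D L ->
  fsum (map term_of (canon D L)) =E Sum (term_of e) (fsum (map term_of (canon D L))).
Proof.
move=> LD; case: e => u [b|x]; rewrite mem_filter //= => /andP [sat uL].
have absorb := canon_absorbs_saturated LD (LD _ uL) sat.
have yes_no_x : wpre u (Sum (myes A) (mno A)) =E
    Sum (wpre u (Var A x)) (wpre u (Sum (myes A) (mno A))).
  apply: d_trans (wpre_congr u (yes_no_absorb (Var A x))) _.
  exact: d_trans (wpre_sum _ _ _) (sum_comm _ _).
apply: d_trans (absorb) _; apply: d_trans (d_sum yes_no_x (der_refl _)) _.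
exact: d_trans (d_sym (sum_assoc _ _ _)) (d_sum (der_refl _) (d_sym absorb)).
Qed.

Lemma canon_sound D L : bounded D L -> fsum (map term_of L) =E fsum (map term_of (canon D L)).
Proof.
move=> LD; apply: d_trans (pad_all_sound D L) _.
apply: d_trans (fsum_eqset term_of (pad_all_mem LD)) _.
rewrite map_cat; apply: d_trans (fsum_cat _ _) _.
by apply: fsum_absorb_all => e; apply: canon_absorbs_var.
Qed.

Fixpoint top_verdict (m : mon) (v : verdict) : Prop :=
  match m with
  | Verd v' => v' = v
  | Sum m1 m2 => top_verdict m1 v \/ top_verdict m2 v
  | _ => False
  end.

Fixpoint child (m : mon) (a : A) (k : mon) : Prop :=
  match m with
  | Pre a' k' => a' = a /\ k' = k
  | Sum m1 m2 => child m1 a k \/ child m2 a k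
  | _ => False
  end.

Lemma step_inv m al k : step m al k ->
  (exists v, top_verdict m v /\ k = Verd A v) \/ (exists a, al = Some a /\ child m a k).
Proof.
elim=> {m al k} [a m|m n al m' _ IH|m n al m' _ IH|v al]; try by [right; exists a|left; exists v].
- by case: IH => [[v [mv ->]]|[a [-> mk]]]; [left; exists v | right; exists a]; split=> //; left.
- by case: IH => [[v [mv ->]]|[a [-> mk]]]; [left; exists v | right; exists a]; split=> //; right.
Qed.

Lemma taus_inv m k : taus m k -> k = m \/ exists v, top_verdict m v /\ k = Verd A v.
Proof.
elim=> {m k} [m|m m1 m' st _ IH]; first by left.
right; case: (step_inv st) => [[v [mv E]]|[a [E _]]] //; subst m1.
by exists v; split => //; case: IH => [->|[v' [-> ->]]].
Qed.

Lemma top_verdict_step m v al : top_verdict m v -> step m al (Verd A v).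
Proof.
elim: m => [v'|a m _|m1 IH1 m2 IH2|x] //= => [->|]; first exact: st_verd.
by case=> H; [apply: st_sumL; apply: IH1 | apply: st_sumR; apply: IH2].
Qed.

Lemma child_step m a k : child m a k -> step m (Some a) k.
Proof.
elim: m => [v'|a' m _|m1 IH1 m2 IH2|x] //= => [[-> ->]|]; first exact: st_pre.
by case=> H; [apply: st_sumL; apply: IH1 | apply: st_sumR; apply: IH2].
Qed.

Lemma top_verdict_flat m b : top_verdict m (verd_of b) <-> ([::], inl b) \in flat m.
Proof.
elim: m => [v|a m _|m1 IH1 m2 IH2|x] /=.
- by case: v; case: b; rewrite /= ?mem_seq1 ?in_nil.
- by split=> // /mapP [].
- rewrite mem_cat; split=> [[/IH1|/IH2] ->|/orP [/IH1|/IH2]]; rewrite ?orbT; by [|left|right].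
- by rewrite mem_seq1.
Qed.

Lemma child_flat m a k e : child m a k -> e \in flat k -> (a :: e.1, e.2) \in flat m.
Proof.
elim: m => [v'|a' m _|m1 IH1 m2 IH2|x] //= => [[-> ->] ek|]; first by apply/mapP; exists e.
by rewrite mem_cat; case=> H ek; [rewrite IH1 | rewrite IH2 ?orbT].
Qed.

Lemma flat_child m a q l : (a :: q, l) \in flat m -> exists k, child m a k /\ (q, l) \in flat k.
Proof.
elim: m => [[]|a' m _|m1 IH1 m2 IH2|x] //=; rewrite ?mem_seq1 //.
- by case/mapP => e em [-> -> ->]; exists m; rewrite -surjective_pairing.
- by rewrite mem_cat => /orP [/IH1|/IH2] [k [mk qk]]; exists k; tauto.
Qed.

Lemma covered_top m b s : top_verdict m (verd_of b) -> covered b (flat m) s.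
Proof.
by move/top_verdict_flat => mb; apply/hasP; exists ([::], inl b); rewrite //= eqxx prefix0s.
Qed.

Lemma covered_taus j k b s : taus j k -> covered b (flat k) s -> covered b (flat j) s.
Proof.
case/taus_inv => [->|[v [jv ->]]] //; case: v jv; case: b => // jv _; exact: covered_top.
Qed.

Lemma covered_step j a k b s : step j (Some a) k ->
  covered b (flat k) s -> covered b (flat j) (a :: s).
Proof.
case/step_inv => [[v [jv ->]]|[a' [[<-] jk]]].
  by case: v jv; case: b => // jv _; apply: covered_top.
case/hasP => e ek /andP [eb es]; apply/hasP; exists (a :: e.1, e.2); first exact: child_flat jk ek.
by rewrite /= eb eqxx es.
Qed.

Lemma taus_trans (m k p : mon) : taus m k -> taus k p -> taus m p.
Proof. by elim=> // m0 m1 m' st _ IH kp; apply: taus_step st (IH kp). Qed.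

Lemma wtrace_cons (m : mon) a s k :
  wtrace m (a :: s) k <-> exists k1, weak_act m a k1 /\ wtrace k1 s k.
Proof.
case: s => [|b s] //=; split; first by move=> mk; exists k; split => //; apply: taus_refl.
case=> k1 [[j1 [j2 [mj1 [st j2k1]]]] k1k]; exists j1, j2; split => //; split => //.
exact: taus_trans j2k1 k1k.
Qed.

Lemma weak_act_step (m k : mon) (a : A) : step m (Some a) k -> weak_act m a k.
Proof. by move=> st; exists m, k; split; [apply: taus_refl | split; [| apply: taus_refl]]. Qed.

Lemma wtrace_verd v s : wtrace (Verd A v) s (Verd A v).
Proof.
elim: s => [|a s IH]; first exact: taus_refl.
by apply/wtrace_cons; exists (Verd A v); split => //; apply/weak_act_step/st_verd.
Qed.

Lemma reach_covered m s b : wtrace m s (Verd A (verd_of b)) <-> covered b (flat m) s.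
Proof.
elim: s m => [|a s IH] m; split.
- by move=> mb; apply: covered_taus mb _; case: b.
- case/hasP => -[[|c q] l] em /andP [/eqP /= lb es] //; subst l.
  by move/top_verdict_flat: em => em; apply: taus_step (top_verdict_step None em) (taus_refl _).
- case/wtrace_cons => k1 [[j1 [j2 [mj1 [st j2k1]]]] k1b].
  by apply: covered_taus mj1 _; apply: covered_step st _; apply: covered_taus j2k1 _; apply/IH.
- case/hasP => -[[|c q] l] em /andP [/eqP /= lb es]; subst l.
  + move/top_verdict_flat: em => em; apply/wtrace_cons; exists (Verd A (verd_of b)).
    by split; [apply/weak_act_step/top_verdict_step | apply: wtrace_verd].
  + case/andP: es => /eqP <- qs; case: (flat_child em) => k [mk qk].
    apply/wtrace_cons; exists k; split; first exact/weak_act_step/child_step.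
    by apply/IH/hasP; exists (q, inl b); rewrite //= eqxx.
Qed.

Lemma flat_subst_verdict sg m e : e \in flat m -> ~~ is_var e -> e \in flat (subst sg m).
Proof.
elim: m e => [v|a m IH|m1 IH1 m2 IH2|x] e //=.
- by case/mapP => e' e'm -> nv; apply/mapP; exists e' => //; apply: IH.
- by rewrite !mem_cat => /orP [H|H] nv; [rewrite IH1 | rewrite IH2 ?orbT].
- by rewrite mem_seq1 => /eqP ->.
Qed.

Lemma flat_subst_var sg m u x f : (u, inr x) \in flat m -> f \in flat (sg x) ->
  (u ++ f.1, f.2) \in flat (subst sg m).
Proof.
elim: m u => [v|a m IH|m1 IH1 m2 IH2|y] u /=.
- by case: v; rewrite ?mem_seq1 // => /eqP [].
- case/mapP => e' e'm [-> E] fx; apply/mapP; exists (e'.1 ++ f.1, f.2) => //.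
  by apply: IH => //; rewrite E -surjective_pairing.
- by rewrite !mem_cat => /orP [H|H] fx; [rewrite IH1 | rewrite IH2 ?orbT].
- by rewrite mem_seq1 => /eqP [-> ->] fx; rewrite -surjective_pairing.
Qed.

Lemma flat_subst_inv sg m e : e \in flat (subst sg m) -> e \in flat m \/
  exists u x f, [/\ (u, inr x) \in flat m, f \in flat (sg x) & e = (u ++ f.1, f.2)].
Proof.
elim: m e => [v|a m IH|m1 IH1 m2 IH2|x] e /=; first by left.
- case/mapP => e' e'm ->; case: (IH _ e'm) => [H|[u [x [f [um fx ->]]]]].
    by left; apply/mapP; exists e'.
  by right; exists (a :: u), x, f; split => //; apply/mapP; exists (u, inr x).
- rewrite !mem_cat => /orP [/IH1|/IH2] [H|[u [x [f [um fx E]]]]]; rewrite ?H ?orbT; auto.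
  + by right; exists u, x, f; rewrite mem_cat um.
  + by right; exists u, x, f; rewrite mem_cat um orbT.
- move=> ex; right; exists [::], x, e; split; rewrite ?mem_head //.
  by rewrite -surjective_pairing.
Qed.

Lemma prefix_mkseq (T : eqType) (s : seq T) w k d :
  prefix s (mkseq w k) -> forall i, i < size s -> nth d s i = w i.
Proof.
case/prefixP => t E i si.
have ik : i < k by rewrite -(size_mkseq w k) E size_cat; apply: leq_trans si (leq_addr _ _).
by rewrite -(nth_mkseq d w ik) E nth_cat si.
Qed.

Lemma prefix_nth (T : eqType) (s w : seq T) d : size s <= size w ->
  (forall i, i < size s -> nth d s i = nth d w i) -> prefix s w.
Proof.
move=> sw sE; rewrite prefixE; apply/eqP; apply: (@eq_from_nth _ d); first by rewrite size_takel.
by move=> i; rewrite size_takel // => si; rewrite nth_take // sE.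
Qed.

Lemma omega_eq_sym (m n : mon) : omega_eq m n -> omega_eq n m.
Proof. by move=> mn sg cl; case: (mn sg cl) => ya no; split => w; [rewrite ya | rewrite no]. Qed.

Lemma omega_eq_covered (m n : mon) sg b w : omega_eq m n -> (forall x, Defs.closed (sg x)) ->
  (exists k, covered b (flat (subst sg m)) (mkseq w k)) ->
  (exists k, covered b (flat (subst sg n)) (mkseq w k)).
Proof.
move=> mn cl [k cov]; have [ya no] := mn sg cl.
have reach (p : mon) : omega_ext (wtrace p ^~ (Verd A (verd_of b))) w <->
    exists k, covered b (flat p) (mkseq w k).
  by split=> -[k' ?]; exists k'; apply/reach_covered.
apply/reach; case: b reach cov => reach cov; [apply/ya | apply/no]; apply/reach; by exists k.
Qed.

Lemma covered_depth (a0 : A) (m n : mon) D b w : omega_eq m n -> bounded D (flat n) ->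
  size w = D -> covered b (flat m) w -> covered b (flat n) w.
Proof.
move=> mn nD wD cov.
have [k cov'] : exists k, covered b (flat (subst (fun=> mend A) n)) (mkseq (nth a0 w) k).
  apply: (omega_eq_covered (m := m)) => //; exists (size w); rewrite mkseq_nth.
  case/hasP: cov => e em /andP [eb ew]; apply/hasP; exists e; last by rewrite eb.
  by apply: flat_subst_verdict; rewrite // /is_var (eqP eb).
case/hasP: cov' => e en /andP [eb ew].
have e_n : e \in flat n.
  by case: (flat_subst_inv en) => [//|[u [x [f [_ fx _]]]]]; rewrite in_nil in fx.
apply/hasP; exists e; rewrite // eb /=; apply: (prefix_nth (d := a0)); first by rewrite wD nD.
by move=> i ei; rewrite (prefix_mkseq a0 ew).
Qed.

(* The marker word p a0^D a1 followed by its continuation only occurs at one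
   offset within the first D letters: the position of a1 determines it. *)
Lemma marker_aperiodic (a0 a1 : A) D (u u' p : seq A) : a0 != a1 ->
  size u <= D -> size u' <= D ->
  (forall i, i < size (u' ++ p ++ nseq D a0 ++ [:: a1]) ->
     nth a0 (u' ++ p ++ nseq D a0 ++ [:: a1]) i = nth a0 (u ++ p ++ nseq D a0 ++ [:: a1]) i) ->
  u' = u.
Proof.
move=> a01 uD u'D agree.
have size_marked z : size (z ++ p ++ nseq D a0 ++ [:: a1]) = size z + size p + D + 1.
  by rewrite !size_cat size_nseq /=; lia.
have nth_marked z i : size z + size p <= i ->
    nth a0 (z ++ p ++ nseq D a0 ++ [:: a1]) i = if i == size z + size p + D then a1 else a0.
  move=> zpi; rewrite -(subnKC zpi) catA -(size_cat z p) -nth_drop drop_size_cat //.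
  rewrite nth_cat size_nseq nth_nseq eqn_add2l; set j := i - _.
  by case: (ltngtP j D) => // [Dj|->]; [rewrite nth_default //= subn_gt0 | rewrite subnn].
have mismatch (long short : seq A) : size short < size long -> size long <= D ->
    nth a0 (short ++ p ++ nseq D a0 ++ [:: a1]) (size short + size p + D) !=
    nth a0 (long ++ p ++ nseq D a0 ++ [:: a1]) (size short + size p + D).
  move=> short_long longD; rewrite nth_marked ?leq_addr // nth_marked; last by lia.
  by rewrite eqxx ifN_eq; [rewrite eq_sym | lia].
case: (ltngtP (size u') (size u)) => cmp.
- by move: (mismatch _ _ cmp uD); rewrite agree ?eqxx // size_marked; lia.
- by move: (mismatch _ _ cmp u'D); rewrite agree ?eqxx // size_marked; lia.
- apply: (@eq_from_nth _ a0) => // i iu'; move: (agree i).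
  by rewrite nth_cat iu' nth_cat -cmp iu'; apply; rewrite size_cat; lia.
Qed.

(* An unsaturated variable monomial u.x of m also occurs in n: below u some
   depth-D word w misses a verdict b in n; substituting x := v.b, where the
   marker v continues w beyond depth D, makes m reach b along u v, and the
   only way for n to do the same is through the monomial u.x itself. *)
Lemma unsaturated_var (a0 a1 : A) (m n : mon) D u x : a0 != a1 -> omega_eq m n ->
  bounded D (flat n) -> size u <= D ->
  (u, inr x) \in flat m -> ~~ saturated D (flat n) u -> (u, inr x) \in flat n.
Proof.
move=> a01 mn nD uD um /allPn [w]; rewrite mem_words_of_size negb_imply => wD /andP [uw nboth].
case/prefixP: uw => p Ew.
have [b nb] : exists b, ~~ covered b (flat n) w.
  by move: nboth; rewrite negb_and => /orP [?|?]; [exists true | exists false].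
set v := p ++ nseq D a0 ++ [:: a1].
set c := wpre v (Verd A (verd_of b)).
set sg := fun y => if y == x then c else mend A.
have sg_closed y : Defs.closed (sg y) by rewrite /sg; case: (y == x); rewrite ?closed_wpre.
have flat_c : flat c = [:: (v, inl b)] by rewrite /c flat_wpre; case: (b); rewrite /= cats0.
have [k cov] : exists k, covered b (flat (subst sg n)) (mkseq (nth a0 (u ++ v)) k).
  apply: (omega_eq_covered (m := m)) => //; exists (size (u ++ v)); rewrite mkseq_nth.
  apply/hasP; exists (u ++ v, inl b); last by rewrite /= eqxx prefix_refl.
  by apply: (flat_subst_var (f := (v, inl b)) um); rewrite /sg eqxx flat_c mem_head.
case/hasP: cov => e en /andP [eb e_uv].
case: (flat_subst_inv en) => [e_n|[u' [y [f [u'n fy E]]]]].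
- case/negP: nb; apply/hasP; exists e => //; rewrite eb /=.
  apply: (prefix_nth (d := a0)); first by rewrite (eqP wD); apply: nD.
  have ew : size e.1 <= size (u ++ p) by rewrite -Ew (eqP wD) nD.
  move=> i ie; rewrite (prefix_mkseq a0 e_uv) // Ew /v catA [LHS]nth_cat.
  by rewrite (leq_trans ie ew).
- move: fy; rewrite /sg; case: (y =P x) => [yx|_]; last by rewrite in_nil.
  subst y e; rewrite flat_c mem_seq1 => /eqP fv; subst f.
  suff u'u : u' = u by rewrite -u'u.
  by apply: (marker_aperiodic (p := p) a01 uD (nD _ u'n)) => /= i ii; rewrite (prefix_mkseq a0 e_uv).
Qed.

Lemma covered_depth_eq (a0 : A) (m n : mon) D b w : omega_eq m n ->
  bounded D (flat m) -> bounded D (flat n) ->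
  size w = D -> covered b (flat m) w = covered b (flat n) w.
Proof.
move=> mn mD nD wD; apply/idP/idP; first exact: (covered_depth a0 mn nD wD).
exact: (covered_depth a0 (omega_eq_sym mn) mD wD).
Qed.

Lemma canon_omega_eq (a0 a1 : A) (m n : mon) D : a0 != a1 -> omega_eq m n ->
  bounded D (flat m) -> bounded D (flat n) -> canon D (flat m) =i canon D (flat n).
Proof.
move=> a01 mn mD nD.
have cov b w : size w = D -> covered b (flat m) w = covered b (flat n) w.
  exact: (covered_depth_eq a0 b mn mD nD).
have sat u : saturated D (flat m) u = saturated D (flat n) u.
  by apply: eq_in_all => w; rewrite mem_words_of_size => /eqP wD; rewrite !cov.
move=> [w l]; rewrite /canon !mem_cat !mem_depth_verdicts !mem_filter sat.
have verd b : [&& l == inl b, size w == D & covered b (flat m) w] =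
              [&& l == inl b, size w == D & covered b (flat n) w].
  by case: (size w =P D) => wD; rewrite ?andbF //= cov.
rewrite !verd {verd}; congr (_ || (_ || _)).
case: l => [b|x] //=; case satn: (saturated D (flat n) w) => //=.
apply/idP/idP => xw.
- exact: unsaturated_var a01 mn nD (mD _ xw) xw (negbT satn).
- by apply: (unsaturated_var a01 (omega_eq_sym mn) mD (nD _ xw) xw); rewrite sat satn.
Qed.

End Completeness.

Theorem mainTheorem19 (A : finType) : 1 < #|A| ->
  forall m n : mon A, omega_eq m n -> derivable (@E_omega_f A) m n.
Proof.
move=> two_actions m n mn.
have [a0 [a1 [_ _ a01]]] := card_gt1P two_actions.
set D := \max_(e <- flat m ++ flat n) size e.1.
have bounded_D L : {subset L <= flat m ++ flat n} -> bounded D L.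
  by move=> sub e eL; apply: (leq_bigmax_seq (F := fun e : monomial A => size e.1) _ (sub e eL)).
have mD : bounded D (flat m) by apply: bounded_D => e em; rewrite mem_cat em.
have nD : bounded D (flat n) by apply: bounded_D => e en; rewrite mem_cat en orbT.
apply: d_trans (flat_sound m) _; apply: d_trans (canon_sound mD) _.
apply: d_trans (fsum_eqset (@term_of A) (canon_omega_eq a01 mn mD nD)) _.
exact: d_sym (d_trans (flat_sound n) (canon_sound nD)).
Qed.
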